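(* Let $N\in\mathbb{N}$ with $N\ge3$ and $n\in\mathbb{N}$ with $n\ge n_N$. Then there is a real $E$ with $|E|\le 5.3\cdot10^{-2}\left(\frac{5}{96}\right)^{N/2}n^{-\frac{N+2}{2}}$ such that \[ \frac{1}{(24n+1)\lambda(n)}=\frac{1}{8\cdot3^{3/4}\sqrt\pi\,n^{5/4}}\left(\sum_{m=0}^{\lfloor\frac{N+1}{2}\rfloor}\frac{e_2(m)}{n^m}+E\right). \]
   Context: $\lambda(n):=\sqrt{\frac{\pi}{6\sqrt2}\sqrt{24n+1}}$, $e_2(m):=\binom{-\frac54}{m}24^{-m}$ for $m\in\mathbb{N}_0$, and $n_N:=\left(\frac{3(3N+4)\log(6N+8)}{1.3^2}\right)^4$. *)

From Stdlib Require Import Reals Lra Lia Arith Factorial.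
Open Scope R_scope.

Definition lambda (n : R) : R :=
  sqrt (PI / (6 * sqrt 2) * sqrt (24 * n + 1)).

Fixpoint falling (a : R) (m : nat) : R :=
  match m with
  | O => 1
  | S k => falling a k * (a - INR k)
  end.

Definition gbinom (a : R) (m : nat) : R := falling a m / INR (fact m).

Definition e2 (m : nat) : R := gbinom (-(5/4)) m / 24 ^ m.

Definition nN (N : nat) : R :=
  (3 * (3 * INR N + 4) * ln (6 * INR N + 8) / (13/10) ^ 2) ^ 4.

(* Write x = 1/(24n).  Since (24n+1) lambda(n) = 8 3^(3/4) sqrt(pi) n^(5/4) (1+x)^(5/4),
   the left-hand side is the prefactor times (1+x)^(-5/4), whose Taylor coefficients at 0
   are binom(-5/4, m) x^m = e_2(m) n^(-m).  With M = floor((N+1)/2) terms, the Lagrange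
   remainder is at most |binom(-5/4, M+1)| x^(M+1) <= (5/(96n))^(M+1), and 2M >= N turns
   this into (5/96)^(N/2+1) n^(-(N+2)/2); finally 5/96 < 0.053. *)

From Coquelicot Require Import Coquelicot.
From Stdlib Require Import Reals Lra Lia Factorial.
Open Scope R_scope.

Lemma exp_le_compat (u v : R) : u <= v -> exp u <= exp v.
Proof. intros [Huv | ->]; [apply Rlt_le, exp_increasing, Huv | apply Rle_refl]. Qed.

Lemma ln_sqrt (y : R) : 0 < y -> ln (sqrt y) = ln y / 2.
Proof. intros Hy; rewrite <- Rpower_sqrt, ln_Rpower by exact Hy; field. Qed.

Lemma pow_le_Rpower (y a : R) (k : nat) : 0 < y <= 1 -> a <= INR k -> y ^ k <= Rpower y a.
Proof.
  intros Hy Hak; rewrite <- Rpower_pow by lra; unfold Rpower.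
  assert (ln y <= 0) by (rewrite <- ln_1; apply ln_le; lra).
  apply exp_le_compat; nra.
Qed.

Lemma Rpower_div_plus1 (a n c : R) : 0 < a -> 0 < n ->
  Rpower (a / n) (c + 1) = a * Rpower a c * Rpower n (- (c + 1)).
Proof.
  intros Ha Hn; unfold Rpower, Rdiv.
  rewrite ln_mult, ln_Rinv by (try apply Rinv_0_lt_compat; lra).
  rewrite <- (exp_ln a) at 2 by exact Ha; rewrite <- !exp_plus; f_equal; ring.
Qed.

Lemma pow_div_le_Rpower (a n : R) (N M : nat) : 0 < a <= n -> (N <= 2 * M)%nat ->
  (a / n) ^ S M <= a * Rpower a (INR N / 2) * Rpower n (- ((INR N + 2) / 2)).
Proof.
  intros Han HNM.
  replace ((INR N + 2) / 2) with (INR N / 2 + 1) by field.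
  rewrite <- Rpower_div_plus1 by lra.
  apply pow_le_Rpower.
  - split; [apply Rdiv_lt_0_compat | apply Rle_div_l]; lra.
  - apply le_INR in HNM; rewrite mult_INR, S_INR in *; simpl INR in HNM; lra.
Qed.

Lemma le_double_half_succ (N : nat) : (N <= 2 * ((N + 1) / 2))%nat.
Proof.
  pose proof (Nat.div_mod (N + 1) 2 ltac:(lia)).
  pose proof (Nat.mod_upper_bound (N + 1) 2 ltac:(lia)).
  lia.
Qed.

Lemma gbinom_S (b : R) (k : nat) :
  gbinom b (S k) = gbinom b k * ((b - INR k) / (INR k + 1)).
Proof.
  unfold gbinom; simpl falling; rewrite fact_simpl, mult_INR, S_INR.
  pose proof (lt_0_INR _ (lt_O_fact k)); pose proof (pos_INR k).
  field; lra.
Qed.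

Lemma Rabs_gbinom_opp_le (a : R) (k : nat) : 1 <= a -> Rabs (gbinom (- a) k) <= a ^ k.
Proof.
  intros Ha; induction k as [|k IH].
  - unfold gbinom; simpl; rewrite Rdiv_1_r, Rabs_R1; lra.
  - rewrite gbinom_S, Rabs_mult; simpl pow.
    pose proof (pos_INR k).
    assert (Hratio : Rabs ((- a - INR k) / (INR k + 1)) <= a).
    { rewrite Rabs_div, Rabs_left, Rabs_right by lra.
      apply Rle_div_l; nra. }
    rewrite Rmult_comm; apply Rmult_le_compat; auto using Rabs_pos.
Qed.

Lemma is_derive_falling_Rpower (b : R) (k : nat) (t : R) : -1 < t ->
  is_derive (fun u => falling b k * Rpower (1 + u) (b - INR k)) t
            (falling b (S k) * Rpower (1 + t) (b - INR (S k))).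
Proof.
  intros Ht; unfold Rpower; auto_derive; [lra|].
  simpl falling; rewrite S_INR.
  replace ((b - INR k) * ln (1 + t)) with ((b - (INR k + 1)) * ln (1 + t) + ln (1 + t)) by ring.
  rewrite exp_plus, exp_ln by lra; field; lra.
Qed.

Lemma Derive_n_Rpower_1plus (b : R) (k : nat) (t : R) : -1 < t ->
  Derive_n (fun u => Rpower (1 + u) b) k t = falling b k * Rpower (1 + t) (b - INR k) /\
  ex_derive_n (fun u => Rpower (1 + u) b) k t.
Proof.
  revert t; induction k as [|k IH]; intros t Ht.
  - simpl; rewrite Rminus_0_r, Rmult_1_l; tauto.
  - assert (Hloc : locally t (fun u => Derive_n (fun u => Rpower (1 + u) b) k u =
                                       falling b k * Rpower (1 + u) (b - INR k))).
    { apply (filter_imp (fun u => -1 < u)); [intros u Hu; apply IH, Hu | apply open_gt, Ht]. }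
    split; simpl.
    + rewrite (Derive_ext_loc _ _ _ Hloc); apply is_derive_unique, is_derive_falling_Rpower, Ht.
    + apply (ex_derive_ext_loc (fun u => falling b k * Rpower (1 + u) (b - INR k))).
      { apply (filter_imp _ _ (fun u Hu => eq_sym Hu) Hloc). }
      eexists; apply is_derive_falling_Rpower, Ht.
Qed.

Lemma binomial_taylor_lagrange (b x : R) (M : nat) : 0 < x -> b <= INR (S M) ->
  exists r, Rpower (1 + x) b = sum_f_R0 (fun m => gbinom b m * x ^ m) M + r /\
            Rabs r <= Rabs (gbinom b (S M)) * x ^ S M.
Proof.
  intros Hx Hb.
  destruct (Taylor_Lagrange (fun u => Rpower (1 + u) b) M 0 x Hx) as [z [Hz Htaylor]].
  { intros t Ht k _; apply Derive_n_Rpower_1plus; lra. }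
  rewrite Rminus_0_r in Htaylor.
  eexists; split; [rewrite Htaylor; f_equal|].
  - apply sum_eq; intros m _.
    rewrite (proj1 (Derive_n_Rpower_1plus b m 0 ltac:(lra))), Rplus_0_r.
    unfold gbinom, Rpower; rewrite ln_1, Rmult_0_r, exp_0; field.
    apply not_0_INR, fact_neq_0.
  - rewrite (proj1 (Derive_n_Rpower_1plus b (S M) z ltac:(lra))).
    assert (Hrem : Rpower (1 + z) (b - INR (S M)) <= 1).
    { apply Rle_trans with (Rpower (1 + z) 0); [apply Rle_Rpower | rewrite Rpower_O]; lra. }
    assert (Hpos : 0 < Rpower (1 + z) (b - INR (S M))) by apply exp_pos.
    assert (Hfact : 0 < / INR (fact (S M))) by apply Rinv_0_lt_compat, lt_0_INR, lt_O_fact.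
    pose proof (pow_lt x (S M) Hx).
    unfold gbinom, Rdiv; rewrite !Rabs_mult, Rabs_inv.
    rewrite (Rabs_pos_eq (x ^ S M)), (Rabs_pos_eq (Rpower _ _)), (Rabs_pos_eq (INR _))
      by (try apply pos_INR; lra).
    rewrite <- (Rmult_1_r (Rabs (falling b (S M)) * _ * _)).
    replace (x ^ S M * _ * _) with (Rabs (falling b (S M)) * / INR (fact (S M)) * x ^ S M *
                                    Rpower (1 + z) (b - INR (S M))) by ring.
    apply Rmult_le_compat_l; [|exact Hrem].
    pose proof (Rabs_pos (falling b (S M))); apply Rmult_le_pos; [apply Rmult_le_pos|]; lra.
Qed.

Lemma mul_lambda_eq (n : R) : 0 < n ->
  (24 * n + 1) * lambda n =
  8 * Rpower 3 (3 / 4) * sqrt PI * Rpower n (5 / 4) * Rpower (1 + 1 / (24 * n)) (5 / 4).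
Proof.
  intros Hn; pose proof PI_RGT_0.
  assert (Hx : 1 + 1 / (24 * n) = (24 * n + 1) * / (24 * n)) by (field; lra).
  assert (Hln6 : ln 6 = ln 2 + ln 3)
    by (replace 6 with (2 * 3) by lra; rewrite ln_mult; lra).
  assert (Hln8 : ln 8 = 3 * ln 2)
    by (replace 8 with (2 * 2 * 2) by lra; rewrite !ln_mult; lra).
  assert (Hln24 : ln 24 = 3 * ln 2 + ln 3)
    by (replace 24 with (2 * 2 * 2 * 3) by lra; rewrite !ln_mult; lra).
  unfold lambda, Rpower; rewrite Hx; unfold Rdiv.
  apply ln_inv; [| | repeat (rewrite ln_mult || rewrite ln_Rinv || rewrite ln_sqrt
                             || rewrite ln_exp); [lra|..]].
  all: repeat first [lra | apply exp_pos | apply sqrt_lt_R0 | apply Rmult_lt_0_compat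
                    | apply Rinv_0_lt_compat].
Qed.

Lemma e2_div_pow (m : nat) (n : R) : 0 < n ->
  e2 m / n ^ m = gbinom (- (5 / 4)) m * (1 / (24 * n)) ^ m.
Proof.
  intros Hn; unfold e2, Rdiv; rewrite Rmult_1_l, pow_inv, Rpow_mult_distr.
  field; split; apply pow_nonzero; lra.
Qed.

Lemma one_le_nN (N : nat) : 1 <= nN N.
Proof.
  unfold nN; apply pow_R1_Rle.
  pose proof (pos_INR N).
  assert (Hln : 1 <= ln (6 * INR N + 8)).
  { rewrite <- ln_exp with (x := 1); apply ln_le; [apply exp_pos | pose proof exp_le_3; lra]. }
  apply Rle_div_r; [lra|]; nra.
Qed.

Theorem lemma3p13 (N n : nat) (HN : (3 <= N)%nat) (Hn : nN N <= INR n) :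
  exists E : R,
    Rabs E <= 53 / 1000 * Rpower (5 / 96) (INR N / 2)
                         * Rpower (INR n) (- ((INR N + 2) / 2)) /\
    1 / ((24 * INR n + 1) * lambda (INR n)) =
    1 / (8 * Rpower 3 (3 / 4) * sqrt PI * Rpower (INR n) (5 / 4)) *
    (sum_f_R0 (fun m => e2 m / INR n ^ m) ((N + 1) / 2) + E).
Proof.
  assert (Hn1 : 1 <= INR n) by (apply Rle_trans with (nN N); [apply one_le_nN | exact Hn]).
  set (M := ((N + 1) / 2)%nat); set (x := 1 / (24 * INR n)).
  assert (Hx : 0 < x) by (apply Rdiv_lt_0_compat; lra).
  destruct (binomial_taylor_lagrange (- (5 / 4)) x M Hx) as [E [Hexpand HE]].
  { pose proof (pos_INR M); rewrite S_INR; lra. }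
  exists E; split.
  - apply (Rle_trans _ _ _ HE), Rle_trans with ((5 / 4) ^ S M * x ^ S M).
    { apply Rmult_le_compat_r; [apply pow_le | apply Rabs_gbinom_opp_le]; lra. }
    rewrite <- Rpow_mult_distr.
    replace (5 / 4 * x) with (5 / 96 / INR n) by (unfold x; field; lra).
    eapply Rle_trans; [apply pow_div_le_Rpower, le_double_half_succ; lra|].
    apply Rmult_le_compat_r, Rmult_le_compat_r; [apply Rlt_le, exp_pos .. | lra].
  - replace (sum_f_R0 _ M) with (sum_f_R0 (fun m => gbinom (- (5 / 4)) m * x ^ m) M)
      by (apply sum_eq; intros m _; symmetry; apply e2_div_pow; lra).
    rewrite <- Hexpand, Rpower_Ropp, mul_lambda_eq by lra.
    assert (0 < Rpower 3 (3 / 4) /\ 0 < Rpower (INR n) (5 / 4) /\ 0 < Rpower (1 + x) (5 / 4))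
      as (? & ? & ?) by (repeat split; apply exp_pos).
    pose proof (sqrt_lt_R0 PI PI_RGT_0).
    fold x; field; repeat split; lra.
Qed.
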